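(* Let $(E,\mu)$ and $(F,\nu)$ be fuzzy Riesz spaces and $T:E\rightarrow F$ a fuzzy Riesz homomorphism. Then the image under $T$ of a fuzzy projection band in $E$ is a fuzzy projection band in $T(E)$.
   Context: A fuzzy order on a real vector space $E$ is a map $\mu:E\times E\to[0,1]$ with $\mu(x,x)=1$; $\mu(x,y)+\mu(y,x)>1$ implies $x=y$; and $\mu(x,z)\ge\sup_{y}\min(\mu(x,y),\mu(y,z))$. Write $x\le y$ for $\mu(x,y)>\frac12$; suprema/infima are taken with respect to this relation. $(E,\mu)$ is a fuzzy ordered linear space if $\mu(x_1,x_2)>\frac12$ implies $\mu(x_1,x_2)\le\mu(x_1+x,x_2+x)$ for all $x$ and $\mu(x_1,x_2)\le\mu(\alpha x_1,\alpha x_2)$ for all $\alpha>0$; it is a fuzzy Riesz space if $x\vee y=\sup\{x,y\}$ and $x\wedge y=\inf\{x,y\}$ exist for all $x,y$. $|x|=x\vee(-x)$. A fuzzy ideal is a vector subspace $A$ such that $\mu(|x|,|y|)>\frac12$ and $y\in A$ imply $x\in A$. A fuzzy band is a fuzzy ideal $B$ such that whenever $D\subseteq B$ and $\sup D$ exists in the space, $\sup D\in B$. $x\perp y$ means $|x|\wedge|y|=0$, and $B^d=\{x: x\perp y\ \forall y\in B\}$. A fuzzy projection band is a fuzzy band $B$ with $E=B\oplus B^d$. A fuzzy Riesz homomorphism is a linear map with $T(x\vee y)=Tx\vee Ty$; $T(E)$ is a fuzzy Riesz subspace of $F$ regarded as a fuzzy Riesz space with the restricted order. *)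

From HB Require Import structures.
From mathcomp Require Import all_boot all_order all_algebra.
From mathcomp Require Import reals.
Set Implicit Arguments. Unset Strict Implicit. Unset Printing Implicit Defensive.
Import Order.TTheory GRing.Theory Num.Theory.
Local Open Scope ring_scope.

Section FuzzyOrder.
Variables (R : realType) (E : Type) (mu : E -> E -> R).

(* A fuzzy order: values in [0,1], reflexive, antisymmetric,
   and sup_y min(mu x y, mu y z) <= mu x z (unfolded as a bound for every y). *)
Definition fuzzy_order : Prop :=
  [/\ (forall x y, 0 <= mu x y <= 1),
      (forall x, mu x x = 1),
      (forall x y, 1 < mu x y + mu y x -> x = y) &
      (forall x y z, Num.min (mu x y) (mu y z) <= mu x z)].

Definition fle (x y : E) : Prop := 2^-1 < mu x y.

(* Sets are predicates E -> Prop; S is the ambient space where bounds are taken. *)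
Definition fullset : E -> Prop := fun _ => True.
Definition pair (x y : E) : E -> Prop := fun z => z = x \/ z = y.

Definition is_ub_in (S D : E -> Prop) (u : E) : Prop :=
  S u /\ forall d, D d -> fle d u.
Definition is_lb_in (S D : E -> Prop) (l : E) : Prop :=
  S l /\ forall d, D d -> fle l d.
Definition is_sup_in (S D : E -> Prop) (s : E) : Prop :=
  is_ub_in S D s /\ forall u, is_ub_in S D u -> fle s u.
Definition is_inf_in (S D : E -> Prop) (i : E) : Prop :=
  is_lb_in S D i /\ forall l, is_lb_in S D l -> fle l i.

End FuzzyOrder.

Section FuzzyRiesz.
Variables (R : realType) (E : lmodType R) (mu : E -> E -> R).

Definition fuzzy_ordered_linear : Prop :=
  [/\ fuzzy_order mu,
      (forall x1 x2 x, fle mu x1 x2 -> mu x1 x2 <= mu (x1 + x) (x2 + x)) &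
      (forall x1 x2 (a : R), fle mu x1 x2 -> 0 < a ->
         mu x1 x2 <= mu (a *: x1) (a *: x2))].

Definition fuzzy_riesz : Prop :=
  fuzzy_ordered_linear /\
  forall x y, (exists s, is_sup_in mu (@fullset E) (pair x y) s) /\
              (exists i, is_inf_in mu (@fullset E) (pair x y) i).

Variable S : E -> Prop.

Definition is_abs_in (x a : E) : Prop := is_sup_in mu S (pair x (- x)) a.

Definition perp_in (x y : E) : Prop :=
  exists a b, [/\ is_abs_in x a, is_abs_in y b & is_inf_in mu S (pair a b) 0].

Definition subspace_in (A : E -> Prop) : Prop :=
  [/\ (forall x, A x -> S x), A 0,
      (forall x y, A x -> A y -> A (x + y)) &
      (forall (c : R) x, A x -> A (c *: x))].

Definition fuzzy_ideal_in (A : E -> Prop) : Prop :=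
  subspace_in A /\
  forall x y a b, S x -> S y -> is_abs_in x a -> is_abs_in y b ->
    fle mu a b -> A y -> A x.

Definition fuzzy_band_in (B : E -> Prop) : Prop :=
  fuzzy_ideal_in B /\
  forall (D : E -> Prop) s, (forall d, D d -> B d) -> is_sup_in mu S D s -> B s.

Definition disj_compl_in (B : E -> Prop) : E -> Prop :=
  fun x => S x /\ forall y, B y -> perp_in x y.

Definition fuzzy_proj_band_in (B : E -> Prop) : Prop :=
  [/\ fuzzy_band_in B,
      (forall x, S x -> exists b c, [/\ B b, disj_compl_in B c & x = b + c]) &
      (forall x, B x -> disj_compl_in B x -> x = 0)].

End FuzzyRiesz.

Definition img_set (A B : Type) (f : A -> B) (P : A -> Prop) : B -> Prop :=
  fun y => exists x, P x /\ y = f x.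

Definition fuzzy_riesz_hom (R : realType) (E F : lmodType R)
  (mu : E -> E -> R) (nu : F -> F -> R) (T : {linear E -> F}) : Prop :=
  forall x y s, is_sup_in mu (@fullset E) (pair x y) s ->
    is_sup_in nu (@fullset F) (pair (T x) (T y)) (T s).

From HB Require Import structures.
From mathcomp Require Import all_boot all_order all_algebra.
From mathcomp Require Import reals.
From mathcomp Require Import lra.
From Stdlib Require Import ClassicalEpsilon Classical.
Import Order.TTheory GRing.Theory Num.Theory.
Local Open Scope ring_scope.
Set Implicit Arguments. Unset Strict Implicit. Unset Printing Implicit Defensive.

(* The relation [mu x y > 1/2] of a fuzzy Riesz space is a lattice order
   compatible with the linear structure, so the usual Riesz-space calculus of
   joins, meets, absolute values and disjointness applies, and a Riesz
   homomorphism preserves all of it.  Writing E = B (+) B^d, every [T u]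
   splits as [T u1 + T u2] with [T u1] in T(B) and [T u2] disjoint from T(B).
   In the Riesz subspace T(E) such a decomposition alone makes T(B) a
   projection band: if [x = b + c] is dominated in absolute value by, or is
   the supremum of, elements of T(B), then its disjoint part [c] is disjoint
   from itself, respectively satisfies [0 <= c <= 0], hence vanishes. *)

Section FuzzyRieszSpace.
Variables (R : realType) (V : lmodType R) (mu : V -> V -> R).
Hypothesis rieszV : fuzzy_riesz mu.

Local Notation "x <=f y" := (fle mu x y) (at level 70, no associativity).

Lemma fle_refl x : x <=f x.
Proof. by case: rieszV => [[[_ mu1 _ _] _ _] _]; rewrite /fle mu1; lra. Qed.

Lemma fle_trans y x z : x <=f y -> y <=f z -> x <=f z.
Proof.
case: rieszV => [[[_ _ _ mu_trans] _ _] _] xy yz.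
by apply: lt_le_trans (mu_trans x y z); rewrite lt_min xy yz.
Qed.

Lemma fle_anti x y : x <=f y -> y <=f x -> x = y.
Proof.
case: rieszV => [[[_ _ mu_anti _] _ _] _]; rewrite /fle => xy yx.
by apply: mu_anti; lra.
Qed.

Lemma fle_add2r z x y : x <=f y -> x + z <=f y + z.
Proof.
by case: rieszV => [[_ muD _] _] xy; apply: lt_le_trans (muD _ _ z xy).
Qed.

Lemma fle_scale a x y : 0 < a -> x <=f y -> a *: x <=f a *: y.
Proof.
case: rieszV => [[_ _ muZ] _] a_gt0 xy.
exact: lt_le_trans (muZ _ _ a xy a_gt0).
Qed.

Lemma fle_add2rE z x y : (x + z <=f y + z) <-> (x <=f y).
Proof.
split; last exact: fle_add2r.
by move=> /(fle_add2r (- z)); rewrite !addrK.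
Qed.

Lemma fle_add x y z w : x <=f y -> z <=f w -> x + z <=f y + w.
Proof.
move=> xy zw; apply: (fle_trans (fle_add2r z xy)).
by rewrite (addrC y z) (addrC y w); apply: fle_add2r.
Qed.

Lemma subr_fge0 x y : (0 <=f y - x) <-> (x <=f y).
Proof. by rewrite -(fle_add2rE x) add0r subrK. Qed.

Lemma subr_fle0 x y : (x - y <=f 0) <-> (x <=f y).
Proof. by rewrite -(fle_add2rE y) add0r subrK. Qed.

Lemma fle_opp x y : x <=f y -> - y <=f - x.
Proof. by move=> xy; rewrite -subr_fge0 opprK addrC subr_fge0. Qed.

Let sup_pair_ex x y : exists s, is_sup_in mu (@fullset V) (pair x y) s :=
  (rieszV.2 x y).1.

Definition fjoin x y : V :=
  sval (constructive_indefinite_description _ (sup_pair_ex x y)).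

Lemma fjoinP x y : is_sup_in mu (@fullset V) (pair x y) (fjoin x y).
Proof. exact: svalP. Qed.

Lemma fle_joinl x y : x <=f fjoin x y.
Proof. by case: (fjoinP x y) => [[_ ub] _]; apply: ub; left. Qed.

Lemma fle_joinr x y : y <=f fjoin x y.
Proof. by case: (fjoinP x y) => [[_ ub] _]; apply: ub; right. Qed.

Lemma fjoin_le x y z : x <=f z -> y <=f z -> fjoin x y <=f z.
Proof. by move=> xz yz; case: (fjoinP x y) => _; apply; split=> // d [->|->]. Qed.

Lemma sup_pair_fjoin x y s :
  is_sup_in mu (@fullset V) (pair x y) s -> s = fjoin x y.
Proof.
move=> [[_ ub] lub]; apply: fle_anti.
  by apply: lub; split=> // d [->|->]; [apply: fle_joinl | apply: fle_joinr].
by apply: fjoin_le; apply: ub; [left | right].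
Qed.

Lemma fjoinC x y : fjoin x y = fjoin y x.
Proof.
by apply: fle_anti; apply: fjoin_le; first [exact: fle_joinl | exact: fle_joinr].
Qed.

Lemma fjoinxx x : fjoin x x = x.
Proof.
by apply: fle_anti; [apply: fjoin_le; apply: fle_refl | apply: fle_joinl].
Qed.

(* In a Riesz space [x /\ y = x + y - x \/ y]; taking this as the definition
   avoids a second choice. *)
Definition fmeet x y : V := x + y - fjoin x y.

Lemma fmeetC x y : fmeet x y = fmeet y x.
Proof. by rewrite /fmeet (addrC x y) fjoinC. Qed.

Lemma fmeetxx x : fmeet x x = x.
Proof. by rewrite /fmeet fjoinxx addrK. Qed.

Lemma fle_meetl x y : fmeet x y <=f x.
Proof.
move: (fle_add2r (x - fjoin x y) (fle_joinr x y)).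
by rewrite [fjoin x y + _]addrC subrK addrA (addrC y x).
Qed.

Lemma fle_meetr x y : fmeet x y <=f y.
Proof. by rewrite fmeetC; exact: fle_meetl. Qed.

Lemma fmeet_ge x y z : z <=f x -> z <=f y -> z <=f fmeet x y.
Proof.
move=> /subr_fge0 zx /subr_fge0 zy; have join_le : fjoin x y <=f x + y - z.
  apply: fjoin_le.
    by move: (fle_add (fle_refl x) zy); rewrite addr0 addrA.
  by move: (fle_add zx (fle_refl y)); rewrite add0r addrAC.
move: (fle_add2r (z - fjoin x y) join_le).
by rewrite [fjoin x y + _]addrC subrK addrA subrK.
Qed.

Lemma inf_pair_fmeet x y : is_inf_in mu (@fullset V) (pair x y) (fmeet x y).
Proof.
split; first by split=> // d [->|->]; [apply: fle_meetl | apply: fle_meetr].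
by move=> l [_ lb]; apply: fmeet_ge; apply: lb; [left | right].
Qed.

Definition fabs x : V := fjoin x (- x).

Lemma fle_abs x : x <=f fabs x.
Proof. exact: fle_joinl. Qed.

Lemma fle_Nabs x : - x <=f fabs x.
Proof. exact: fle_joinr. Qed.

Lemma fabsN x : fabs (- x) = fabs x.
Proof. by rewrite /fabs opprK fjoinC. Qed.

Lemma fabs_ge0 x : 0 <=f fabs x.
Proof.
have half_gt0 : (0 : R) < 2^-1 by lra.
move: (fle_scale half_gt0 (fle_add (fle_abs x) (fle_Nabs x))).
rewrite subrr scaler0 scalerDr -scalerDl (_ : 2^-1 + 2^-1 = 1 :> R) ?scale1r //.
lra.
Qed.

Lemma fabs_eq0 x : fabs x = 0 -> x = 0.
Proof.
move=> x0; apply: fle_anti; first by rewrite -x0; apply: fle_abs.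
by have := fle_opp (fle_Nabs x); rewrite x0 oppr0 opprK.
Qed.

Lemma fabsB_le x y : fabs (x - y) <=f fabs x + fabs y.
Proof.
apply: fjoin_le; first exact: fle_add (fle_abs x) (fle_Nabs y).
by rewrite opprB addrC; apply: fle_add (fle_Nabs x) (fle_abs y).
Qed.

Definition fdisjoint x y : Prop := fmeet (fabs x) (fabs y) = 0.

Lemma fdisjointC x y : fdisjoint x y -> fdisjoint y x.
Proof. by rewrite /fdisjoint fmeetC. Qed.

Lemma fdisjointNl x y : fdisjoint x y -> fdisjoint (- x) y.
Proof. by rewrite /fdisjoint fabsN. Qed.

Lemma fdisjoint_self x : fdisjoint x x -> x = 0.
Proof. by rewrite /fdisjoint fmeetxx => /fabs_eq0. Qed.

Lemma fmeet_eq0_le a b c :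
  0 <=f a -> 0 <=f b -> b <=f c -> fmeet a c = 0 -> fmeet a b = 0.
Proof.
move=> a_ge0 b_ge0 bc ac0; apply: fle_anti; last exact: fmeet_ge.
rewrite -ac0; apply: fmeet_ge; first exact: fle_meetl.
exact: fle_trans (fle_meetr a b) bc.
Qed.

(* With [w = c /\ (a + b)], [w - a] lies below both [c] and [b], so below
   [c /\ b = 0]; hence [w <= c /\ a = 0]. *)
Lemma fmeet_eq0D a b c :
  0 <=f a -> 0 <=f b -> fmeet c a = 0 -> fmeet c b = 0 -> fmeet c (a + b) = 0.
Proof.
move=> a_ge0 b_ge0 ca0 cb0; set w := fmeet c (a + b).
have w_ge0 : 0 <=f w.
  apply: fmeet_ge; first by rewrite -ca0; apply: fle_meetl.
  by rewrite -[0]addr0; apply: fle_add.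
have w_le_a : w <=f a.
  rewrite -subr_fle0 -cb0; apply: fmeet_ge.
    move: (fle_add (fle_meetl c (a + b)) (fle_opp a_ge0)).
    by rewrite oppr0 addr0.
  by rewrite -(fle_add2rE a) subrK addrC; apply: fle_meetr.
by apply: fle_anti => //; rewrite -ca0; apply: fmeet_ge => //; apply: fle_meetl.
Qed.

Lemma fdisjoint_le z x y : fdisjoint z y -> fabs x <=f fabs y -> fdisjoint z x.
Proof. by move=> zy xy; apply: (fmeet_eq0_le _ _ xy zy); apply: fabs_ge0. Qed.

Lemma fdisjointB z x y : fdisjoint z x -> fdisjoint z y -> fdisjoint z (x - y).
Proof.
move=> zx zy; apply: (fmeet_eq0_le _ _ (fabsB_le x y)); try apply: fabs_ge0.
by apply: fmeet_eq0D => //; apply: fabs_ge0.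
Qed.

(* [y \/ 0] lies below both [|y|] and [|w|], hence below [|y| /\ |w| = 0]. *)
Lemma fle_disjoint_le0 y w : y <=f w -> fdisjoint y w -> y <=f 0.
Proof.
move=> yw yw0; have join_le : fjoin y 0 <=f fmeet (fabs y) (fabs w).
  apply: fmeet_ge; apply: fjoin_le; try apply: fabs_ge0; first exact: fle_abs.
  exact: fle_trans yw (fle_abs w).
by move: (fle_trans (fle_joinl y 0) join_le); rewrite yw0.
Qed.

Lemma fle_disjoint_addr d b c :
  fdisjoint d c -> fdisjoint b c -> d <=f b + c -> d <=f b.
Proof.
move=> dc bc d_le; rewrite -subr_fle0; apply: (fle_disjoint_le0 (w := c)).
  by rewrite -(fle_add2rE b) subrK addrC.
by apply/fdisjointC/fdisjointB; apply: fdisjointC.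
Qed.

Lemma fle_disjoint_ge0 d b c :
  fdisjoint d c -> fdisjoint b c -> d <=f b + c -> 0 <=f c.
Proof.
move=> dc bc d_le; rewrite -[c]opprK -oppr0; apply: fle_opp.
apply: (fle_disjoint_le0 (w := b - d)).
  by rewrite -(fle_add2rE (c + d)) addKr addrACA addNr addr0.
by apply/fdisjointNl/fdisjointB; apply: fdisjointC.
Qed.

Lemma sup_in_sub S D s :
  is_sup_in mu (@fullset V) D s -> S s -> is_sup_in mu S D s.
Proof. by move=> [[_ ub] lub] Ss; split=> // u [_ ub_u]; apply: lub. Qed.

Lemma inf_in_sub S D i :
  is_inf_in mu (@fullset V) D i -> S i -> is_inf_in mu S D i.
Proof. by move=> [[_ lb] glb] Si; split=> // l [_ lb_l]; apply: glb. Qed.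

Lemma sup_in_uniq S D s s' :
  is_sup_in mu S D s -> is_sup_in mu S D s' -> s = s'.
Proof.
by move=> [ub lub] [ub' lub']; apply: fle_anti; [apply: lub | apply: lub'].
Qed.

Lemma inf_in_uniq S D i i' :
  is_inf_in mu S D i -> is_inf_in mu S D i' -> i = i'.
Proof.
by move=> [lb glb] [lb' glb']; apply: fle_anti; [apply: glb' | apply: glb].
Qed.

Definition riesz_subspace (S : V -> Prop) : Prop :=
  subspace_in (@fullset V) S /\ forall x y, S x -> S y -> S (fjoin x y).

Lemma riesz_subspace_full : riesz_subspace (@fullset V).
Proof. by []. Qed.

Section RieszSubspace.
Variable S : V -> Prop.
Hypothesis rsubS : riesz_subspace S.

Lemma riesz_subspace0 : S 0.
Proof. by case: rsubS => [[]]. Qed.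

Lemma riesz_subspaceD x y : S x -> S y -> S (x + y).
Proof. by case: rsubS => [[_ _ SD _] _]; apply: SD. Qed.

Lemma riesz_subspaceN x : S x -> S (- x).
Proof. by case: rsubS => [[_ _ _ SZ] _] Sx; rewrite -scaleN1r; apply: SZ. Qed.

Lemma riesz_subspace_abs x : S x -> S (fabs x).
Proof. by case: rsubS => [_ Sjoin] Sx; apply: Sjoin (riesz_subspaceN Sx). Qed.

Lemma riesz_subspace_meet x y : S x -> S y -> S (fmeet x y).
Proof.
case: rsubS => [_ Sjoin] Sx Sy; apply: riesz_subspaceD (riesz_subspaceD Sx Sy) _.
exact/riesz_subspaceN/Sjoin.
Qed.

Lemma is_abs_inE x a : S x -> is_abs_in mu S x a <-> a = fabs x.
Proof.
move=> Sx; have abs_x := sup_in_sub (fjoinP x (- x)) (riesz_subspace_abs Sx).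
by split=> [/sup_in_uniq/(_ abs_x) | ->].
Qed.

Lemma perp_inE x y : S x -> S y -> perp_in mu S x y <-> fdisjoint x y.
Proof.
move=> Sx Sy; have meet_xy := inf_in_sub (inf_pair_fmeet (fabs x) (fabs y))
  (riesz_subspace_meet (riesz_subspace_abs Sx) (riesz_subspace_abs Sy)).
split=> [[a [b [/(is_abs_inE _ Sx)-> /(is_abs_inE _ Sy)-> meet0]]] | xy].
  exact: inf_in_uniq meet_xy meet0.
by exists (fabs x), (fabs y); split; rewrite ?is_abs_inE // -xy.
Qed.

Lemma disj_compl_inE C c : (forall y, C y -> S y) ->
  disj_compl_in mu S C c <-> S c /\ forall y, C y -> fdisjoint c y.
Proof.
move=> CS; split=> [[Sc perp] | [Sc disj]]; split=> // y Cy.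
  by rewrite -perp_inE //; [apply: perp | apply: CS].
by rewrite perp_inE //; [apply: disj | apply: CS].
Qed.

Lemma sup_in_empty D s : (forall d, ~ D d) -> is_sup_in mu S D s -> s = 0.
Proof.
move=> D0 [[Ss _] lub].
have s_le u : S u -> s <=f u by move=> Su; apply: lub; split=> // d /D0.
apply: fle_anti; first exact: s_le riesz_subspace0.
by rewrite -(fle_add2rE s) add0r; apply/s_le/riesz_subspaceD.
Qed.

Section Decomposition.
Variable C : V -> Prop.
Hypothesis subC : subspace_in S C.
Hypothesis decC :
  forall x, S x -> exists b c, [/\ C b, disj_compl_in mu S C c & x = b + c].

Let CS : forall y, C y -> S y. Proof. by case: subC. Qed.

Lemma decomp_fideal : fuzzy_ideal_in mu S C.
Proof.
split=> // x y ax ay Sx Sy /(is_abs_inE _ Sx)-> /(is_abs_inE _ Sy)-> xy Cy.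
have [b [c [Cb /(disj_compl_inE _ CS) [_ cC] x_eq]]] := decC Sx; subst x.
have c_bc : fdisjoint c (b + c) := fdisjoint_le (cC _ Cy) xy.
have cc : fdisjoint c c.
  by move: (fdisjointB c_bc (cC _ Cb)); rewrite addrC addKr.
by rewrite (fdisjoint_self cc) addr0.
Qed.

(* A nonempty family in [C] lies below [s = b + c]; disjointness from [c]
   puts it below [b], so [s <= b] and [c <= 0 <= c]. *)
Lemma decomp_fband : fuzzy_band_in mu S C.
Proof.
split=> [|D s DC sup_s]; first exact: decomp_fideal.
have [[Ss ub] lub] := sup_s.
have [b [c [Cb /(disj_compl_inE _ CS) [_ cC] s_eq]]] := decC Ss.
have [[d Dd] | noD] := classic (exists d, D d); last first.
  rewrite (sup_in_empty _ sup_s); first by case: subC.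
  by move=> d Dd; apply: noD; exists d.
have Dc d' : D d' -> fdisjoint d' c by move=> /DC /cC /fdisjointC.
have bc : fdisjoint b c := fdisjointC (cC _ Cb).
have c_ge0 : 0 <=f c.
  by apply: fle_disjoint_ge0 (Dc _ Dd) bc _; rewrite -s_eq; apply: ub.
have s_le_b : s <=f b.
  apply: lub; split=> [|d' Dd']; first exact: CS.
  by apply: fle_disjoint_addr (Dc _ Dd') bc _; rewrite -s_eq; apply: ub.
have c_le0 : c <=f 0 by rewrite -(fle_add2rE b) add0r addrC -s_eq.
by rewrite s_eq (fle_anti c_le0 c_ge0) addr0.
Qed.

Lemma decomp_fproj_band : fuzzy_proj_band_in mu S C.
Proof.
split=> [|//|x Cx /(disj_compl_inE _ CS) [_ xC]]; first exact: decomp_fband.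
exact/fdisjoint_self/xC.
Qed.

End Decomposition.
End RieszSubspace.
End FuzzyRieszSpace.

Lemma subspace_in_widen (R : realType) (V : lmodType R) (S S' A : V -> Prop) :
  (forall x, S x -> S' x) -> subspace_in S A -> subspace_in S' A.
Proof. by move=> SS' [AS A0 AD AZ]; split=> // x /AS /SS'. Qed.

Lemma img_subspace (R : realType) (E F : lmodType R) (T : {linear E -> F})
    (P A : E -> Prop) :
  subspace_in P A ->
  subspace_in (img_set (T : E -> F) P) (img_set (T : E -> F) A).
Proof.
move=> [AP A0 AD AZ]; split.
- by move=> _ [u [Au ->]]; exists u; split=> //; apply: AP.
- by exists 0; rewrite linear0.
- move=> _ _ [u [Au ->]] [v [Av ->]].
  by exists (u + v); rewrite linearD; split=> //; apply: AD.
- by move=> a _ [u [Au ->]]; exists (a *: u); rewrite linearZ; split=> //; apply: AZ.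
Qed.

Section RieszHomomorphism.
Variables (R : realType) (E F : lmodType R).
Variables (mu : E -> E -> R) (nu : F -> F -> R) (T : {linear E -> F}).
Hypotheses (rieszE : fuzzy_riesz mu) (rieszF : fuzzy_riesz nu).
Hypothesis homT : fuzzy_riesz_hom mu nu T.

Lemma fjoin_hom x y : T (fjoin rieszE x y) = fjoin rieszF (T x) (T y).
Proof. exact/sup_pair_fjoin/homT/fjoinP. Qed.

Lemma fabs_hom x : T (fabs rieszE x) = fabs rieszF (T x).
Proof. by rewrite /fabs fjoin_hom linearN. Qed.

Lemma fmeet_hom x y : T (fmeet rieszE x y) = fmeet rieszF (T x) (T y).
Proof. by rewrite /fmeet linearB linearD fjoin_hom. Qed.

Lemma fdisjoint_hom x y : fdisjoint rieszE x y -> fdisjoint rieszF (T x) (T y).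
Proof. by rewrite /fdisjoint -!fabs_hom -fmeet_hom => ->; rewrite linear0. Qed.

Lemma img_riesz_subspace :
  riesz_subspace rieszF (img_set (T : E -> F) (@fullset E)).
Proof.
have fullE : subspace_in (@fullset E) (@fullset E) by [].
split; first exact: subspace_in_widen (img_subspace T fullE).
by move=> _ _ [u [_ ->]] [v [_ ->]]; exists (fjoin rieszE u v); rewrite fjoin_hom.
Qed.

Lemma img_disj_compl B c : disj_compl_in mu (@fullset E) B c ->
  disj_compl_in nu (img_set (T : E -> F) (@fullset E))
    (img_set (T : E -> F) B) (T c).
Proof.
move=> [_ cB]; split=> [|_ [v [Bv ->]]]; first by exists c.
rewrite perp_inE; [|exact: img_riesz_subspace | by exists c | by exists v].
by apply/fdisjoint_hom/(perp_inE (riesz_subspace_full rieszE)); last exact: cB.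
Qed.

End RieszHomomorphism.

Theorem theorem2p8 (R : realType) (E F : lmodType R)
  (mu : E -> E -> R) (nu : F -> F -> R) (T : {linear E -> F}) (B : E -> Prop) :
  fuzzy_riesz mu -> fuzzy_riesz nu -> fuzzy_riesz_hom mu nu T ->
  fuzzy_proj_band_in mu (@fullset E) B ->
  fuzzy_proj_band_in nu (img_set (T : E -> F) (@fullset E)) (img_set (T : E -> F) B).
Proof.
move=> rieszE rieszF homT [[[subB _] _] decB _].
apply: (decomp_fproj_band (img_riesz_subspace rieszE rieszF homT)).
  exact: img_subspace subB.
move=> _ [u [_ ->]]; have [b [c [Bb Bc ->]]] := decB u I.
exists (T b), (T c); rewrite linearD; split=> //; first by exists b.
exact: (img_disj_compl rieszE rieszF homT Bc).
Qed.
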